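(* Let $S_{r,N}$ be a nontrivial atomic exponential Puiseux semiring. Then $|\Delta(S_{r,N})|=1$ if and only if $N=\mathbb{N}$.
   Context: $\mathbb{N}=\{0,1,2,\dots\}$. A numerical monoid $N$ is an additive submonoid of $\mathbb{N}$ with finite complement in $\mathbb{N}$. For $r\in\mathbb{Q}_{>0}$ write $r=\mathsf{n}(r)/\mathsf{d}(r)$ in lowest terms. The exponential Puiseux semiring $S_{r,N}$ is the additive submonoid of $\mathbb{Q}_{\ge0}$ generated by $\{r^k:k\in N\}$; it is nontrivial if $r\notin\mathbb{N}$, and then atomic iff $\mathsf{n}(r)>1$. For an atomic monoid $M$ and $x\in M$ with set of lengths $\mathsf{L}(x)$, a positive integer $d$ is a distance of $x$ if $\mathsf{L}(x)\cap\{l,\dots,l+d\}=\{l,l+d\}$ for some $l\in\mathsf{L}(x)$; $\Delta(M)$ is the union over $x\in M$ of the sets of distances of $x$. *)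

From mathcomp Require Import all_boot all_order all_algebra.
Set Implicit Arguments. Unset Strict Implicit. Unset Printing Implicit Defensive.
Import Order.TTheory GRing.Theory Num.Theory.
Local Open Scope ring_scope.

Definition numerical_monoid (N : nat -> Prop) : Prop :=
  [/\ N 0%N,
      (forall m n, N m -> N n -> N (m + n)%N)
    & exists b : nat, forall n, (b <= n)%N -> N n].

Definition puiseux_semiring (r : rat) (N : nat -> Prop) (x : rat) : Prop :=
  exists s : seq nat, (forall k, k \in s -> N k) /\
                      x = \sum_(k <- s) r ^+ k.

Definition is_atom (M : rat -> Prop) (a : rat) : Prop :=
  [/\ M a, a != 0 &
      forall b c, M b -> M c -> a = b + c -> b = 0 \/ c = 0].

Definition in_lengths (M : rat -> Prop) (x : rat) (l : nat) : Prop :=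
  exists s : seq rat, [/\ size s = l,
                          (forall a, a \in s -> is_atom M a) &
                          x = \sum_(a <- s) a].

Definition is_distance (M : rat -> Prop) (x : rat) (d : nat) : Prop :=
  (0 < d)%N /\
  exists l, [/\ in_lengths M x l, in_lengths M x (l + d)%N &
                forall k, (l < k < l + d)%N -> ~ in_lengths M x k].

Definition delta_set (M : rat -> Prop) (d : nat) : Prop :=
  exists x, M x /\ is_distance M x d.

(* Write r = a/b in lowest terms; atomicity and r not an integer give a, b >= 2.
   The atoms of S_{r,N} are the powers r^k with k in N, so a factorization is a
   multiset of exponents.  If two multisets of exponents have the same value,
   the difference of their multiplicity vectors is the coefficient sequence of
   (bX - a) Q(X) for an integral Q (Gauss' lemma for the root a/b), i.e. they
   differ by a sequence of trades a r^j <-> b r^(j+1), each changing the length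
   by b - a.  Hence every distance is a multiple of |a - b|; when N = nat the
   trades can be performed one at a time, so every length in between occurs and
   Delta = {|a - b|}, realised by a r^k = b r^(k+1).  If N <> nat, let m > 1 be
   its least positive element: the element a^m = b^m r^m has factorizations of
   lengths a^m and b^m but none strictly in between (a factorization using r^0
   at all uses it a^m times), which yields the larger distance |a^m - b^m|. *)

From Stdlib Require Import Classical_Prop Wf_nat.
From mathcomp Require Import all_boot all_order all_algebra.
From mathcomp Require Import zify ring lra.
Set Implicit Arguments. Unset Strict Implicit. Unset Printing Implicit Defensive.
Import Order.TTheory GRing.Theory Num.Theory.
Local Open Scope ring_scope.

Lemma sum_delta (V : nmodType) (F : nat -> V) D i :
  \sum_(j < D) F j *+ ((j : nat) == i) = F i *+ (i < D)%N.
Proof. by under eq_bigr => j _ do rewrite mulrb; rewrite -big_mkcond big_ord1_eq -mulrb. Qed.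

Lemma sum_seq_count (V : nmodType) D (s : seq nat) (F : nat -> V) :
  all (fun k => k < D)%N s -> \sum_(k <- s) F k = \sum_(j < D) F j *+ count_mem (j : nat) s.
Proof.
elim: s => [|k s IH] /=; first by rewrite big_nil big1.
case/andP=> kD /IH sE; rewrite big_cons sE.
under [RHS]eq_bigr => j _ do rewrite /= mulrnDr eq_sym.
by rewrite big_split /= sum_delta kD.
Qed.

Lemma seq_bounded (s : seq nat) : exists D, all (fun k => k < D)%N s.
Proof. by exists (\max_(k <- s) k).+1; apply/allP => k ks; rewrite ltnS leq_bigmax_seq. Qed.

Definition between (u v z : int) := (u <= z <= v) || (v <= z <= u).

Lemma betweenC u v z : between u v z = between v u z.
Proof. exact: orbC. Qed.

Lemma between_shift u v z g :
  between u v z -> z != u -> (g %| z - u)%Z -> between (u + g) v z.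
Proof.
rewrite /between => uzv zu /dvdzP[k zuk].
have [k_le0|k_gt0] := lerP k 0; have [g_le0|g_gt0] := lerP g 0; nia.
Qed.

Lemma ltn_dist_expn a b m : (0 < a)%N -> (0 < b)%N -> a != b -> (1 < m)%N ->
  (`|a - b| < `|a ^ m - b ^ m|)%N.
Proof.
wlog ab : a b / (a < b)%N => [wlog a_gt0 b_gt0 a_neq_b m_gt1 | a_gt0 _ _].
  have [ab|ba] : (a < b)%N \/ (b < a)%N by lia.
    exact: wlog.
  by have := wlog b a ba b_gt0 a_gt0 _ m_gt1; rewrite eq_sym; lia.
case: m => [|[|n]] // _; rewrite (expnS a) (expnS b).
have am : (a ^ n.+1 <= b ^ n.+1)%N by rewrite leq_exp2r // ltnW.
have bn : (b <= b ^ n.+1)%N by rewrite expnS leq_pmulr // expn_gt0 (leq_trans a_gt0 (ltnW ab)).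
nia.
Qed.

Lemma delta_set_of_lengths (M : rat -> Prop) x u v :
  M x -> in_lengths M x u -> in_lengths M x v -> u != v ->
  (forall z, (u < z < v)%N || (v < z < u)%N -> ~ in_lengths M x z) ->
  delta_set M `|u - v|%N.
Proof.
move=> Mx Lu Lv uv gap; exists x; split=> //; split; first by lia.
case: (ltngtP u v) uv => // [uv|vu] _.
- exists u; rewrite (_ : u + _ = v)%N; last by lia.
  by split=> // z zuv; apply: gap; rewrite zuv.
- exists v; rewrite (_ : v + _ = u)%N; last by lia.
  by split=> // z zvu; apply: gap; rewrite zvu orbT.
Qed.

Definition seq_of_counts D (c : nat -> int) := flatten [seq nseq `|c j|%N j | j <- index_iota 0 D].

Lemma sum_seq_of_counts (V : nmodType) D c (F : nat -> V) :
  \sum_(k <- seq_of_counts D c) F k = \sum_(j < D) F j *+ `|c j|%N.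
Proof.
rewrite big_flatten big_map big_mkord; apply: eq_bigr => j _.
by rewrite big_nseq iter_addr addr0.
Qed.

Section Carries.

Variables a b : nat.
Hypotheses (a_gt0 : (0 < a)%N) (b_gt0 : (0 < b)%N) (coprime_ab : coprime a b).

(* [carry_seq D p W] says that sum_j p_j X^j = (bX - a) * sum_j W_(j+1) X^j
   with both sides of degree < D; for p the difference of two exponent
   multiplicity vectors, W_j counts the trades a r^(j-1) -> b r^j between them. *)
Definition carry_seq D (p W : nat -> int) :=
  [/\ W 0%N = 0, W D = 0 & forall j, (j < D)%N -> p j = b%:Z * W j - a%:Z * W j.+1].

Lemma carry_seq_sym D c c' W : carry_seq D (fun j => c' j - c j) W ->
  carry_seq D (fun j => c j - c' j) (fun j => - W j).
Proof. by case=> W0 WD Wp; split=> [||j /Wp]; rewrite ?W0 ?WD //; lia. Qed.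

Lemma sum_carry_seq D p W :
  carry_seq D p W -> \sum_(j < D) p j = (b%:Z - a%:Z) * \sum_(j < D) W j.
Proof.
case=> W0 WD Wp; have shiftW : \sum_(j < D) W j.+1 = \sum_(j < D) W j.
  have : \sum_(j < D.+1) W j = \sum_(j < D.+1) W j by [].
  rewrite {1}big_ord_recl big_ord_recr /= W0 WD add0r addr0 => <-.
  by apply: eq_bigr => j _; rewrite /bump add1n.
rewrite (eq_bigr _ (fun (j : 'I_D) _ => Wp j (ltn_ord j))) sumrB -!mulr_sumr shiftW; ring.
Qed.

Lemma carry_seq_le0 D p W k : carry_seq D p W -> (k <= D)%N ->
  (forall j, (j < k)%N -> 0 <= p j) -> forall j, (j <= k)%N -> W j <= 0.
Proof.
case=> W0 _ Wp kD p_ge0; elim=> [|j IH] jk; first by rewrite W0.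
have := Wp j (leq_trans jk kD); have := p_ge0 j jk; have := IH (ltnW jk); nia.
Qed.

Lemma carry_seq_ge0 D p W k : carry_seq D p W ->
  (forall j, (k <= j < D)%N -> 0 <= p j) -> forall j, (k <= j <= D)%N -> 0 <= W j.
Proof.
case=> _ WD Wp p_ge0 j /andP[kj jD].
have [n Dj] : exists n, (D - j)%N = n by exists (D - j)%N.
elim: n j kj jD Dj => [|n IH] j kj jD Dj; first by rewrite (_ : j = D) ?WD //; lia.
have jD' : (j < D)%N by lia.
have pj : 0 <= p j by apply: p_ge0; rewrite kj jD'.
have Wj1 : 0 <= W j.+1 by apply: IH; lia.
by have := Wp j jD'; nia.
Qed.

(* The identity is sum_j p_j r^j = b w0 cleared of denominators; W_1 is
   (b w0 - p_0) / a, an integer because a divides it times a power of b. *)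
Lemma carry_of_homogeneous_sum D (p : nat -> int) (w0 : int) :
  \sum_(j < D) p j * a%:Z ^+ j * b%:Z ^+ (D - j.+1) = w0 * b%:Z ^+ D ->
  exists W : nat -> int, [/\ W 0%N = w0, W D = 0 &
     forall j, (j < D)%N -> p j = b%:Z * W j - a%:Z * W j.+1].
Proof.
elim: D p w0 => [|D IH] p w0.
  by rewrite big_ord0 expr0 mulr1 => <-; exists (fun _ => 0).
rewrite big_ord_recl expr0 mulr1 subn1 /= exprS.
set S := \sum_(i < D) p i.+1 * a%:Z ^+ i * b%:Z ^+ (D - i.+1).
have -> : \sum_(i < D) p (bump 0 i) * a%:Z ^+ bump 0 i * b%:Z ^+ (D.+1 - (bump 0 i).+1)
          = a%:Z * S.
  by rewrite /S mulr_sumr; apply: eq_bigr => i _; rewrite /bump add1n subSS exprS; ring.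
move=> sum_eq.
have : (a%:Z %| (w0 * b%:Z - p 0%N) * b%:Z ^+ D)%Z by apply/dvdzP; exists S; lia.
rewrite Gauss_dvdzl; last by apply: coprimezXr; rewrite coprimezE.
case/dvdzP=> w1 w1_eq.
have [|W [W0 WD Wp]] := IH (fun j => p j.+1) w1.
  apply: (mulfI (_ : a%:Z != 0)); first by lia.
  by rewrite -/S; lia.
exists (fun j => if j is j'.+1 then W j' else w0); split=> // -[|j] jD //.
  by rewrite W0; lia.
exact: Wp.
Qed.

Variable r : rat.
Hypothesis r_ab : r = a%:R / b%:R.

Lemma r_gt0 : 0 < r.
Proof. by rewrite r_ab divr_gt0 // ltr0n. Qed.

Lemma b_r_expS k : b%:R * r ^+ k.+1 = a%:R * r ^+ k.
Proof. by rewrite exprS r_ab; field; rewrite pnatr_eq0 -lt0n. Qed.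

Lemma carry_seq_of_root D (p : nat -> int) :
  \sum_(j < D) (p j)%:~R * r ^+ j = 0 -> exists W, carry_seq D p W.
Proof.
move=> root_p; have [|W [W0 WD Wp]] := @carry_of_homogeneous_sum D p 0.
  apply: (@intr_inj rat); rewrite mul0r rmorph0 rmorph_sum /=.
  transitivity (b%:R ^+ D.-1 * \sum_(j < D) (p j)%:~R * r ^+ j); last by rewrite root_p mulr0.
  rewrite mulr_sumr; apply: eq_bigr => -[j jD] _ /=.
  rewrite !rmorphM !rmorphXn /= -!pmulrn r_ab (_ : D.-1 = (D - j.+1) + j)%N; last by lia.
  by rewrite exprD exprMn exprVn; field; rewrite expf_neq0 // pnatr_eq0 -lt0n.
by exists W.
Qed.

Definition counts (s : seq nat) (j : nat) : int := (count_mem j s)%:Z.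
Definition cvalue D (c : nat -> int) : rat := \sum_(j < D) (c j)%:~R * r ^+ j.
Definition csize D (c : nat -> int) : int := \sum_(j < D) c j.

Lemma cvalue_counts D s :
  all (fun k => k < D)%N s -> cvalue D (counts s) = \sum_(k <- s) r ^+ k.
Proof.
by move=> sD; rewrite (sum_seq_count _ sD); apply: eq_bigr => j _; rewrite mulr_natl.
Qed.

Lemma csize_counts D s : all (fun k => k < D)%N s -> csize D (counts s) = (size s)%:Z.
Proof.
move=> sD; rewrite /csize -sum1_size -natz natr_sum (sum_seq_count _ sD).
by apply: eq_bigr => j _; rewrite mulr1n natz.
Qed.

Lemma carry_seq_of_cvalue D c c' :
  cvalue D c = cvalue D c' -> exists W, carry_seq D (fun j => c' j - c j) W.
Proof.
move=> Ec; apply: carry_seq_of_root.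
under eq_bigr => j _ do rewrite rmorphB mulrBl.
by apply/eqP; rewrite sumrB subr_eq0; apply/eqP; exact: esym Ec.
Qed.

Lemma size_congr_factorizations s s' : \sum_(k <- s) r ^+ k = \sum_(k <- s') r ^+ k ->
  exists T : int, (size s')%:Z - (size s)%:Z = (b%:Z - a%:Z) * T.
Proof.
have [D] := seq_bounded (s ++ s'); rewrite all_cat => /andP[sD s'D].
rewrite -(cvalue_counts sD) -(cvalue_counts s'D) => /carry_seq_of_cvalue[W /sum_carry_seq sumW].
by exists (\sum_(j < D) W j); rewrite -sumW sumrB -(csize_counts sD) -(csize_counts s'D).
Qed.

Lemma cvalueD D c d : cvalue D (fun j => c j + d j) = cvalue D c + cvalue D d.
Proof. by rewrite -big_split; apply: eq_bigr => j _; rewrite rmorphD mulrDl. Qed.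

Lemma cvalueB D c d : cvalue D (fun j => c j - d j) = cvalue D c - cvalue D d.
Proof. by rewrite -sumrB; apply: eq_bigr => j _; rewrite rmorphB mulrBl. Qed.

Lemma cvalue_delta D k (n : int) :
  cvalue D (fun j => n *+ (j == k)) = n%:~R * r ^+ k *+ (k < D)%N.
Proof.
rewrite -(sum_delta (fun j => n%:~R * r ^+ j)).
by apply: eq_bigr => j _; rewrite rmorphMn mulrnAl.
Qed.

Lemma csizeD D c d : csize D (fun j => c j + d j) = csize D c + csize D d.
Proof. exact: big_split. Qed.

Lemma csizeB D c d : csize D (fun j => c j - d j) = csize D c - csize D d.
Proof. exact: sumrB. Qed.

Lemma csize_delta D k (n : int) : csize D (fun j => n *+ (j == k)) = n *+ (k < D)%N.
Proof. exact: sum_delta. Qed.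

(* The exchange a r^i = b r^(i+1), as a change of exponent multiplicities. *)
Definition trade_vector i j : int := b%:Z *+ (j == i.+1) - a%:Z *+ (j == i).

Lemma cvalue_trade_vector D i : (i.+1 < D)%N -> cvalue D (trade_vector i) = 0.
Proof.
move=> iD; rewrite cvalueB !cvalue_delta iD (ltnW iD) !mulr1n.
by apply/eqP; rewrite subr_eq0 b_r_expS.
Qed.

Lemma csize_trade_vector D i : (i.+1 < D)%N -> csize D (trade_vector i) = b%:Z - a%:Z.
Proof. by move=> iD; rewrite csizeB !csize_delta iD (ltnW iD) !mulr1n. Qed.

Lemma carry_seq_trade D c c' W i : (i.+1 < D)%N ->
  carry_seq D (fun j => c' j - c j) W ->
  carry_seq D (fun j => c' j - (c j + trade_vector i j)) (fun j => W j - (j == i.+1)%:Z).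
Proof.
move=> iD [W0 WD Wp]; split=> [||j jD]; rewrite ?W0 ?WD /=; try lia.
by rewrite /trade_vector eqSS; have := Wp j jD; lia.
Qed.

Definition carry_weight D (W : nat -> int) := (\sum_(j < D.+1) absz (W j))%N.

Lemma carry_weight_trade D (W : nat -> int) i : (i.+1 <= D)%N -> 0 < W i.+1 ->
  (carry_weight D (fun j => W j - (j == i.+1)%:Z)%R < carry_weight D W)%N.
Proof.
move=> iD Wi_gt0; pose i1 : 'I_D.+1 := Ordinal (iD : i.+1 < D.+1)%N.
rewrite /carry_weight (bigD1 i1) // [X in (_ < X)%N](bigD1 i1) //= eqxx.
rewrite -addSn leq_add //; first lia.
apply/eq_leq/eq_bigr => j /negPf ji.
by rewrite (_ : (j == i.+1 :> nat) = false) ?subr0 //; apply: ji.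
Qed.

Lemma carry_weight_opp D W : carry_weight D (fun j => - W j) = carry_weight D W.
Proof. by apply: eq_bigr => j _; rewrite abszN. Qed.

Lemma trade_step D c c' W :
  carry_seq D (fun j => c' j - c j) W -> (forall j, 0 <= c j) -> (forall j, 0 <= c' j) ->
  (exists2 j, (j < D)%N & 0 < W j) ->
  exists i, [/\ (i.+1 < D)%N, forall j, 0 <= c j + trade_vector i j,
    carry_seq D (fun j => c' j - (c j + trade_vector i j)) (fun j => W j - (j == i.+1)%:Z)
  & (carry_weight D (fun j => W j - (j == i.+1)%:Z)%R < carry_weight D W)%N].
Proof.
move=> carryW c_ge0 c'_ge0 [j jD Wj]; have [W0 WD Wp] := carryW.
have [i1 Wi1 i1_min] := ex_minnP (ex_intro (fun j => 0 < W j) j Wj).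
have i1_gt0 : (0 < i1)%N by case: i1 Wi1 {i1_min} => //; rewrite W0.
have i1D : (i1 < D)%N by apply: leq_ltn_trans (i1_min j Wj) jD.
rewrite -(prednK i1_gt0) in Wi1 i1D; set i := i1.-1 in Wi1 i1D.
have Wi : W i <= 0 by rewrite leNgt; apply/negP => /i1_min; lia.
have ci : a%:Z <= c i by have := Wp i (ltnW i1D); have := c'_ge0 i; nia.
exists i; split=> //; last by apply: carry_weight_trade; rewrite 1?ltnW.
- by move=> k; have := c_ge0 k; rewrite /trade_vector; case: (k =P i) => [->|/eqP ki]; lia.
- exact: carry_seq_trade.
Qed.

Lemma cvalue_trade D c i : (i.+1 < D)%N ->
  cvalue D (fun j => c j + trade_vector i j) = cvalue D c.
Proof. by move=> iD; rewrite cvalueD cvalue_trade_vector ?addr0. Qed.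

Lemma csize_trade D c i : (i.+1 < D)%N ->
  csize D (fun j => c j + trade_vector i j) = csize D c + (b%:Z - a%:Z).
Proof. by move=> iD; rewrite csizeD csize_trade_vector. Qed.

(* Trades on either side strictly decrease the carry weight and move csize by
   b - a, so the sizes sweep through every value between csize c and csize c'
   in the residue class of csize c. *)
Lemma intermediate_csize D n (c c' W : nat -> int) :
  (carry_weight D W < n)%N -> carry_seq D (fun j => c' j - c j) W ->
  cvalue D c = cvalue D c' -> (forall j, 0 <= c j) -> (forall j, 0 <= c' j) ->
  forall z, (b%:Z - a%:Z %| z - csize D c)%Z -> between (csize D c) (csize D c') z ->
  exists2 c2, (forall j, 0 <= c2 j) & cvalue D c2 = cvalue D c /\ csize D c2 = z.
Proof.
elim: n c c' W => // n IH c c' W wW carryW Ec c_ge0 c'_ge0 z gz zc.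
have [-> | zc1] := eqVneq z (csize D c); first by exists c.
have [-> | zc2] := eqVneq z (csize D c'); first by exists c'.
have sizes : csize D c' - csize D c = (b%:Z - a%:Z) * \sum_(j < D) W j.
  by rewrite -sumrB; exact: sum_carry_seq carryW.
have [j Wj] : exists j : 'I_D, W j != 0.
  apply/existsP; apply: contraT; rewrite negb_exists => /forallP W0.
  move: sizes zc; rewrite big1 => [|j _]; last by apply/eqP; rewrite -[_ == _]negbK W0.
  by rewrite /between; lia.
have [Wj_gt0 | Wj_lt0] : 0 < W j \/ W j < 0 by lia.
- have [i [iD c2_ge0 carry2 w2]] :=
    trade_step carryW c_ge0 c'_ge0 (ex_intro2 _ _ (j : nat) (ltn_ord j) Wj_gt0).
  have [|||c3 c3_ge0 [E3 S3]] := IH _ c' _ (leq_trans w2 wW) carry2 _ c2_ge0 c'_ge0 z.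
  - by rewrite cvalue_trade.
  - by rewrite csize_trade //; case/dvdzP: gz => k gz; apply/dvdzP; exists (k - 1); lia.
  - by rewrite csize_trade //; apply: between_shift => //; lia.
  by exists c3; rewrite // E3 cvalue_trade.
- have [|i [iD c2_ge0 carry2 w2]] :=
    trade_step (carry_seq_sym carryW) c'_ge0 c_ge0 _.
    by exists (j : nat); rewrite ?oppr_gt0.
  have [|||c3 c3_ge0 [E3 S3]] := IH c _ _ _ (carry_seq_sym carry2) _ c_ge0 c2_ge0 z gz.
  - by rewrite carry_weight_opp (leq_trans w2) // carry_weight_opp.
  - by rewrite cvalue_trade.
  - rewrite csize_trade // betweenC; apply: between_shift; rewrite 1?betweenC //.
    by case/dvdzP: gz => k gz; apply/dvdzP; exists (k - \sum_(j < D) W j); lia.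
  by exists c3.
Qed.

Lemma size_seq_of_counts D c :
  (forall j, 0 <= c j) -> (size (seq_of_counts D c))%:Z = csize D c.
Proof.
move=> c_ge0; rewrite -sum1_size -natz natr_sum sum_seq_of_counts.
by apply: eq_bigr => j _; rewrite mulr1n natz gez0_abs.
Qed.

Lemma value_seq_of_counts D c :
  (forall j, 0 <= c j) -> \sum_(k <- seq_of_counts D c) r ^+ k = cvalue D c.
Proof.
move=> c_ge0; rewrite sum_seq_of_counts; apply: eq_bigr => j _.
by rewrite pmulrn gez0_abs // mulrzl.
Qed.

Lemma intermediate_length s s' z : \sum_(k <- s) r ^+ k = \sum_(k <- s') r ^+ k ->
  (b%:Z - a%:Z %| z - (size s)%:Z)%Z -> between (size s) (size s') z ->
  exists s'', (size s'')%:Z = z /\ \sum_(k <- s'') r ^+ k = \sum_(k <- s) r ^+ k.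
Proof.
have [D] := seq_bounded (s ++ s'); rewrite all_cat => /andP[sD s'D].
rewrite -(cvalue_counts sD) -(cvalue_counts s'D) -(csize_counts sD) -(csize_counts s'D).
move=> Ec gz zc; have [W carryW] := carry_seq_of_cvalue Ec.
have [//|//|c c_ge0 [Ec2 <-]] := intermediate_csize (ltnSn _) carryW Ec _ _ gz zc.
by exists (seq_of_counts D c); rewrite size_seq_of_counts ?value_seq_of_counts.
Qed.

Lemma size_factorization_nat t n : \sum_(k <- t) r ^+ k = n%:R ->
  exists2 T : int, 0 <= T & (size t)%:Z = n%:Z + (b%:Z - a%:Z) * T.
Proof.
have [D] := seq_bounded (0%N :: t); rewrite /= => /andP[D_gt0 tD].
have val_n : cvalue D (fun j => n%:Z *+ (j == 0%N)) = n%:R.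
  by rewrite cvalue_delta D_gt0 expr0 mulr1.
rewrite -(cvalue_counts tD) -val_n => /esym/carry_seq_of_cvalue[W carryW].
exists (\sum_(j < D) W j).
  apply: sumr_ge0 => -[[|j] jD] _ /=; first by case: carryW => ->.
  apply: (carry_seq_ge0 (k := 1%N) carryW) => [i /andP[i_gt0 _]|]; last by rewrite /= ltnW.
  by rewrite (_ : (i == 0%N) = false) ?subr0 //; case: i i_gt0.
have := sum_carry_seq carryW; rewrite sumrB.
rewrite (csize_counts tD : \sum_(j < D) counts t j = _).
by rewrite (csize_delta D 0 n : \sum_(j < D) n%:Z *+ ((j : nat) == 0%N) = _) D_gt0; lia.
Qed.

Lemma dvdn_nat_factorization t m n : all (fun k => m <= k)%N t ->
  \sum_(k <- t) r ^+ k = n%:R -> (a ^ m %| n)%N.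
Proof.
move=> tm val_t; have [E tE] := seq_bounded t.
have nbE : (b ^ E * n = \sum_(k <- t) a ^ k * b ^ (E - k))%N.
  apply/eqP; rewrite -(eqr_nat rat) natrM natr_sum -val_t mulr_sumr.
  apply/eqP/eq_big_seq => k kt; rewrite natrM !natrX r_ab expr_div_n.
  rewrite -{1}(subnK (ltnW (allP tE k kt))) exprD; field.
  by rewrite expf_neq0 // pnatr_eq0 -lt0n.
rewrite -(Gauss_dvdr _ (coprimeXl _ (coprimeXr E coprime_ab))) nbE big_seq.
apply: dvdn_sum => k kt; rewrite -(subnK (allP tm k kt)) expnD -mulnA.
by rewrite dvdn_mull // dvdn_mulr.
Qed.

Lemma sum_powers_ge0 s : 0 <= \sum_(k <- s) r ^+ k.
Proof. by apply: sumr_ge0 => k _; rewrite exprn_ge0 // ltW // r_gt0. Qed.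

Lemma expr_le_sum_powers s k : k \in s -> r ^+ k <= \sum_(j <- s) r ^+ j.
Proof. by move=> ks; rewrite (big_rem k ks) /= lerDl sum_powers_ge0. Qed.

Lemma sum_powers_eq0 s : \sum_(k <- s) r ^+ k = 0 -> s = [::].
Proof.
case: s => // k s /eqP; rewrite eq_le lt_geF //.
by apply: lt_le_trans (expr_le_sum_powers (mem_head k s)); rewrite exprn_gt0 // r_gt0.
Qed.

Lemma sum_powers_nseq n k : \sum_(j <- nseq n k) r ^+ j = n%:R * r ^+ k.
Proof. by rewrite big_nseq iter_addr addr0 mulr_natl. Qed.

Lemma sum_powers_shift m s : all (fun k => m <= k)%N s ->
  \sum_(k <- s) r ^+ k = r ^+ m * \sum_(k <- map (subn^~ m) s) r ^+ k.
Proof.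
move=> sm; rewrite big_map mulr_sumr; apply: eq_big_seq => k ks.
by rewrite -exprD subnKC // (allP sm).
Qed.

(* The zeros of s contribute count_mem 0 s, and the rest is a multiple of a^m,
   so either s consists of zeros or it has none and s - m factorizes b^m. *)
Lemma factorizations_of_expn m s : (0 < m)%N ->
  all (fun k => (k == 0) || (m <= k))%N s -> \sum_(k <- s) r ^+ k = (a ^ m)%:R ->
  size s = (a ^ m)%N \/ exists2 T : int, 0 <= T & (size s)%:Z = (b ^ m)%:Z + (b%:Z - a%:Z) * T.
Proof.
move=> m_gt0 s0m val_s; set t := [seq k <- s | k != 0%N].
have size_s : size s = (count_mem 0%N s + size t)%N.
  by rewrite size_filter -(count_predC (pred1 0%N)).
have val_split : \sum_(k <- s) r ^+ k = (count_mem 0%N s)%:R + \sum_(k <- t) r ^+ k.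
  rewrite (bigID (fun k => k == 0%N)) big_filter /= -sum1_count natr_sum.
  by congr (_ + _); apply: eq_bigr => k /eqP ->.
have c0_le : (count_mem 0%N s <= a ^ m)%N.
  by rewrite -(ler_nat rat) -val_s val_split lerDl sum_powers_ge0.
have val_t : \sum_(k <- t) r ^+ k = (a ^ m - count_mem 0%N s)%:R.
  by rewrite natrB // -val_s val_split addrC addKr.
have tm : all (fun k => m <= k)%N t.
  by apply/allP => k; rewrite mem_filter => /andP[k0 /(allP s0m)]; rewrite (negPf k0).
have /(dvdn_nat_factorization tm) := val_t.
have [c0_am _ | c0_lt /dvdn_leq] := eqVneq (count_mem 0%N s) (a ^ m)%N.
  by left; move: val_t; rewrite c0_am subnn => /sum_powers_eq0 t0; rewrite size_s t0 addn0.
rewrite subn_gt0 ltn_neqAle c0_lt c0_le => /(_ isT) am_le; right.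
have c0_0 : count_mem 0%N s = 0%N by lia.
rewrite c0_0 subn0 (sum_powers_shift tm) in val_t.
have val_t' : \sum_(k <- map (subn^~ m) t) r ^+ k = (b ^ m)%:R.
  apply: (mulfI (_ : r ^+ m != 0)); first by rewrite expf_neq0 // lt0r_neq0 // r_gt0.
  by rewrite val_t !natrX r_ab expr_div_n; field; rewrite expf_neq0 // pnatr_eq0 -lt0n.
have [T T_ge0 size_t] := size_factorization_nat val_t'.
by exists T; rewrite // size_s c0_0 -size_t size_map.
Qed.

Section Factorizations.

Hypotheses (a_gt1 : (1 < a)%N) (b_gt1 : (1 < b)%N).

Lemma a_neq_b : a != b.
Proof. by apply: contraTneq coprime_ab => <-; rewrite /coprime gcdnn; lia. Qed.

(* Otherwise the carries give b W_k - a W_(k+1) = -1 with W_k <= 0 <= W_(k+1),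
   impossible for a, b >= 2. *)
Lemma sum_powers_neq_expr s k : k \notin s -> \sum_(j <- s) r ^+ j != r ^+ k.
Proof.
move=> ks; apply/eqP => val_s.
have [D] := seq_bounded (k :: s); rewrite /= => /andP[kD sD].
have val_k : cvalue D (fun j => 1 *+ (j == k)) = r ^+ k by rewrite cvalue_delta kD mul1r.
move: val_s; rewrite -(cvalue_counts sD) -val_k => /esym/carry_seq_of_cvalue[W carryW].
have count_ge0 j : 0 <= counts s j by [].
have Wk : W k <= 0.
  by apply: (carry_seq_le0 carryW (ltnW kD)) => // j jk; have := count_ge0 j; lia.
have Wk1 : 0 <= W k.+1.
  by apply: (carry_seq_ge0 (k := k.+1) carryW) => [j jk|]; [have := count_ge0 j; lia | lia].
have [_ _ /(_ k kD)] := carryW; rewrite eqxx /counts (count_memPn ks).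
have [Wk0|Wk_lt0] : W k = 0 \/ W k <= -1 by lia.
  have [Wk1_0|Wk1_gt0] : W k.+1 = 0 \/ 1 <= W k.+1 by lia.
    by rewrite Wk0 Wk1_0; lia.
  by nia.
by nia.
Qed.

Variable N : nat -> Prop.
Local Notation S := (puiseux_semiring r N).

Lemma expr_is_atom k : N k -> is_atom S (r ^+ k).
Proof.
move=> Nk; split.
- by exists [:: k]; rewrite big_seq1; split=> // j; rewrite inE => /eqP ->.
- by rewrite expf_neq0 // lt0r_neq0 // r_gt0.
move=> _ _ [s1 [_ ->]] [s2 [_ ->]] val_k.
have := sum_powers_ge0 s1; rewrite le_eqVlt => /orP[/eqP <-|s1_gt0]; first by left.
have := sum_powers_ge0 s2; rewrite le_eqVlt => /orP[/eqP <-|s2_gt0]; first by right.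
exfalso; have [|ks] := boolP (k \in s1 ++ s2).
  by rewrite mem_cat => /orP[] /expr_le_sum_powers; lra.
by move: (sum_powers_neq_expr ks); rewrite big_cat val_k eqxx.
Qed.

Lemma atom_is_expr x : is_atom S x -> exists2 k, N k & x = r ^+ k.
Proof.
case=> -[[|k s] [sN ->]] x_neq0 x_irr; first by rewrite big_nil eqxx in x_neq0.
exists k; first by apply: sN; rewrite mem_head.
rewrite big_cons in x_irr *.
case: s {x_neq0} sN x_irr => [|j s] sN x_irr; first by rewrite big_nil addr0.
have [] := x_irr (r ^+ k) (\sum_(i <- j :: s) r ^+ i) _ _ erefl.
- exists [:: k]; rewrite big_seq1; split=> // i.
  by rewrite inE => /eqP ->; apply: sN; rewrite mem_head.
- by exists (j :: s); split=> // i ijs; apply: sN; rewrite inE ijs orbT.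
- by move/eqP; rewrite (negbTE (expf_neq0 _ (lt0r_neq0 r_gt0))).
- by move/sum_powers_eq0.
Qed.

Lemma in_lengthsP x l : in_lengths S x l <->
  exists s, [/\ size s = l, forall k, k \in s -> N k & x = \sum_(k <- s) r ^+ k].
Proof.
split=> [[xs [<- xs_atoms ->]] | [s [<- sN ->]]].
  elim: xs xs_atoms => [|y xs IH] atoms; first by exists [::]; rewrite !big_nil.
  have [k Nk ->] := atom_is_expr (atoms y (mem_head y xs)).
  have [|s [size_s sN val_s]] := IH; first by move=> z zxs; apply: atoms; rewrite inE zxs orbT.
  exists (k :: s); rewrite !big_cons /= size_s val_s; split=> // j.
  by rewrite inE => /orP[/eqP -> | /sN].
exists (map (fun k => r ^+ k) s); rewrite size_map big_map; split=> // y /mapP[k ks ->].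
exact/expr_is_atom/sN.
Qed.

Lemma in_lengths_nseq n k : N k -> in_lengths S (n%:R * r ^+ k) n.
Proof.
move=> Nk; apply/in_lengthsP; exists (nseq n k); rewrite size_nseq sum_powers_nseq.
by split=> // j /nseqP[->].
Qed.

Lemma delta_set_consecutive k : N k -> N k.+1 -> delta_set S `|a - b|%N.
Proof.
move=> Nk Nk1; have x_val : a%:R * r ^+ k = b%:R * r ^+ k.+1 by rewrite b_r_expS.
apply: (delta_set_of_lengths (x := a%:R * r ^+ k)) a_neq_b _ => [||| z zab].
- by exists (nseq a k); rewrite sum_powers_nseq; split=> // j /nseqP[->].
- exact: in_lengths_nseq.
- by rewrite x_val; apply: in_lengths_nseq.
case/in_lengthsP=> s [size_s _]; rewrite -sum_powers_nseq => /size_congr_factorizations[T].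
have T_cases : T <= 0 \/ 1 <= T by lia.
by rewrite size_nseq size_s; case: T_cases; case/orP: zab => /andP[]; nia.
Qed.

Lemma delta_set_gap m : (0 < m)%N -> N 0 -> N m -> (forall j, (0 < j < m)%N -> ~ N j) ->
  delta_set S `|a ^ m - b ^ m|%N.
Proof.
move=> m_gt0 N0 Nm gap.
have x_val : (a ^ m)%:R * r ^+ 0 = (b ^ m)%:R * r ^+ m.
  by rewrite expr0 mulr1 !natrX r_ab expr_div_n; field; rewrite expf_neq0 // pnatr_eq0 -lt0n.
apply: (delta_set_of_lengths (x := (a ^ m)%:R * r ^+ 0)) => [||||z zab].
- by exists (nseq (a ^ m) 0); rewrite sum_powers_nseq; split=> // j /nseqP[->].
- exact: in_lengths_nseq.
- by rewrite x_val; apply: in_lengths_nseq.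
- by rewrite eqn_exp2r // a_neq_b.
case/in_lengthsP=> s [size_s sN]; rewrite expr0 mulr1 => /esym val_s.
have s0m : all (fun k => (k == 0) || (m <= k))%N s.
  apply/allP => -[|k] // /sN Nk; rewrite leqNgt; apply/negP => km; exact: gap _ _ Nk.
have [ab|ba] : (a < b)%N \/ (b < a)%N by have := a_neq_b; lia.
  have := ltn_exp2r a b m_gt0; rewrite ab => abm.
  by case: (factorizations_of_expn m_gt0 s0m val_s) => [|[T]]; nia.
have := ltn_exp2r b a m_gt0; rewrite ba => bam.
by case: (factorizations_of_expn m_gt0 s0m val_s) => [|[T]]; nia.
Qed.

Lemma delta_set_full e : (forall n, N n) -> delta_set S e -> e = `|a - b|%N.
Proof.
move=> N_all [x [_ [e_gt0 [l [/in_lengthsP[s [size_s _ val_s]] L' gap]]]]].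
case/in_lengthsP: L' => s' [size_s' _ val_s'].
have val_ss' := etrans (esym val_s) val_s'.
have [T size_T] := size_congr_factorizations val_ss'.
have T_cases : T <= -1 \/ 1 <= T by rewrite size_s size_s' in size_T; nia.
have e_ge : (`|a - b| <= e)%N by rewrite size_s size_s' in size_T; case: T_cases; nia.
apply/eqP; rewrite eqn_leq e_ge andbT leqNgt; apply/negP => e_gt.
have [||s'' [size_s'' val_s'']] := @intermediate_length s s' (l + `|a - b|)%N val_ss'.
- apply/dvdzP; rewrite size_s.
  have [ab|ba] : (a < b)%N \/ (b < a)%N by have := a_neq_b; lia.
  + by exists 1; lia.
  + by exists (-1); lia.
- by rewrite /between size_s size_s'; lia.
apply: (gap (l + `|a - b|)%N); first by have := a_neq_b; lia.
apply/in_lengthsP; exists s''; split=> [|k _|]; last by rewrite val_s'' val_s.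
- by apply/eqP; rewrite -eqz_nat; apply/eqP.
- exact: N_all.
Qed.

Lemma delta_set_singletonP : numerical_monoid N ->
  (exists d, forall e, delta_set S e <-> e = d) <-> (forall n, N n).
Proof.
case=> N0 N_add [c N_ge_c]; split=> [[d delta_d] | N_all]; last first.
  exists `|a - b|%N => e; split=> [|->]; first exact: delta_set_full.
  exact: delta_set_consecutive (N_all 0%N) (N_all 1%N).
have [N1 | N1] := classic (N 1%N).
  by elim=> [|n IH] //; rewrite -addn1; apply: N_add.
have [m [[[m_gt0 Nm] m_least] _]] :=
  dec_inh_nat_subset_has_unique_least_element (fun n => 0 < n /\ N n)%N
    (fun n => classic _) (ex_intro _ c.+1 (conj (ltn0Sn c) (N_ge_c _ (leqnSn c)))).
have m_gt1 : (1 < m)%N.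
  by rewrite ltn_neqAle m_gt0 andbT; apply/eqP => m1; apply: N1; rewrite m1.
have gap j : (0 < j < m)%N -> ~ N j.
  by case/andP=> j_gt0 jm Nj; move/ssrnat.leP: (m_least j (conj j_gt0 Nj)); lia.
have d1 := (delta_d _).1 (delta_set_consecutive (N_ge_c c (leqnn c)) (N_ge_c c.+1 (leqnSn c))).
have d2 := (delta_d _).1 (delta_set_gap (ltnW m_gt1) N0 Nm gap).
by have := ltn_dist_expn a_gt0 b_gt0 a_neq_b m_gt1; rewrite d1 d2 ltnn.
Qed.

End Factorizations.

End Carries.

Theorem mainTheorem11 (r : rat) (N : nat -> Prop) :
  0 < r ->
  (~ exists n : nat, r = n%:R) ->
  (1 < numq r)%R ->
  numerical_monoid N ->
  ((exists d : nat, forall e : nat, delta_set (puiseux_semiring r N) e <-> e = d)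
   <-> (forall n : nat, N n)).
Proof.
(* 0 < r is implied by 1 < numq r. *)
move=> _ r_not_nat numq_gt1; set a := `|numq r|%N; set b := `|denq r|%N.
have a_gt1 : (1 < a)%N by rewrite /a; lia.
have b_gt0 : (0 < b)%N by rewrite absz_gt0 denq_neq0.
have r_ab : r = a%:R / b%:R.
  by rewrite -{1}(divq_num_den r) /a /b !natr_absz !ger0_norm ?denq_ge0 //; lia.
have b_gt1 : (1 < b)%N.
  rewrite ltn_neqAle b_gt0 andbT; apply/eqP => b1.
  by apply: r_not_nat; exists a; rewrite r_ab -b1 divr1.
exact: (delta_set_singletonP (ltnW a_gt1) b_gt0 (coprime_num_den r) r_ab a_gt1 b_gt1).
Qed.
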